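(* There is a constant $c>0$ such that for every $n\ge 3$ and every initial coloring of the cycle $C_n$, the stabilization time of the Random Majority Model (RMM) on $C_n$ is at most $c n^2$; i.e., the stabilization time of RMM on $C_n$ is in $\mathcal{O}(n^2)$.
   Context: A coloring of a graph is a map from its nodes to $\{b,w\}$. In the Random Majority Model (RMM), all nodes update simultaneously in each round: a node adopts the color strictly more frequent among its neighbors in the previous round, and in case of a tie it chooses blue or white independently and uniformly at random. RMM is a Markov chain on colorings; in the directed graph on colorings with an edge $s\to s'$ whenever the transition has positive probability, an absorbing component is a maximal strongly connected component with no outgoing edge. The stabilization time is the expected number of rounds until the process reaches an absorbing component. *)

From HB Require Import structures.
From mathcomp Require Import all_boot all_order all_algebra.
From mathcomp Require Import all_classical all_reals all_analysis.
Set Implicit Arguments. Unset Strict Implicit. Unset Printing Implicit Defensive.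
Import Order.TTheory GRing.Theory Num.Theory.
Local Open Scope ring_scope.

(* Colors: true = blue, false = white. A coloring of the graph on node set V. *)
Definition coloring (V : finType) := {ffun V -> bool}.

Section RMM.
Variables (R : realType) (V : finType) (adj : rel V).

Definition nbcount (s : coloring V) (v : V) (c : bool) : nat :=
  #|[set u | adj v u & s u == c]|.

Definition node_prob (s : coloring V) (v : V) (c : bool) : R :=
  let nb := nbcount s v true in
  let nw := nbcount s v false in
  if (nw < nb)%N then (if c then 1 else 0)
  else if (nb < nw)%N then (if c then 0 else 1)
  else 1 / 2.

(* RMM transition probability: all nodes update simultaneously and independently *)
Definition rmm_trans (s s' : coloring V) : R := \prod_(v : V) node_prob s v (s' v).

Definition rmm_edge : rel (coloring V) := fun s s' => 0 < rmm_trans s s'.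

(* s lies in an absorbing component: its strongly connected component
   (maximal strongly connected set containing s) has no outgoing edge *)
Definition in_scc (s t : coloring V) : bool :=
  connect rmm_edge s t && connect rmm_edge t s.

Definition absorbing (s : coloring V) : bool :=
  [forall t, forall t', (in_scc s t && rmm_edge t t') ==> in_scc s t'].

(* q t s' = P(X_t = s' and X_0,...,X_t all outside absorbing components),
   starting from X_0 = s0 *)
Fixpoint survive (s0 : coloring V) (t : nat) : {ffun coloring V -> R} :=
  match t with
  | 0 => [ffun s => if (s == s0) && ~~ absorbing s then 1 else 0]
  | t'.+1 => [ffun s' => if absorbing s' then 0
                         else \sum_(s : coloring V) survive s0 t' s * rmm_trans s s']
  end.

(* expected number of rounds until an absorbing component is reached:
   E[T] = sum_{t >= 0} P(T > t), as an extended real (may be +oo) *)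
Definition stab_time (s0 : coloring V) : \bar R :=
  (\sum_(0 <= t <oo) ((\sum_(s : coloring V) survive s0 t s)%:E))%E.

End RMM.

Definition cycle_adj (n : nat) : rel 'I_n :=
  fun u v => ((val v == (val u).+1 %% n) || (val u == (val v).+1 %% n))%N.

From HB Require Import structures.
From mathcomp Require Import all_boot all_order all_algebra.
From mathcomp Require Import all_classical all_reals all_analysis.
From mathcomp Require Import lra.
Set Implicit Arguments. Unset Strict Implicit. Unset Printing Implicit Defensive.
Import Order.TTheory GRing.Theory Num.Theory.
Local Open Scope ring_scope.

(* Let B be the number of blue nodes and Phi = 4 B (n - B), i.e. four times
   the number of (blue, white) pairs of nodes.  On the cycle a node turns blue
   with probability the mean of its two neighbours' colours, so E[B'] = B and
   E[Phi'] = Phi - 4 Var B'.  Nodes update independently and every node whose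
   neighbours disagree (a tie) contributes 1/4 to Var B', so from a coloring
   with a tie Phi drops by at least 1 in expectation.  A tie-free coloring is
   moved deterministically by a rotation, an injective map on colorings, hence
   it is absorbing.  So Phi is a Lyapunov function and the stabilization time
   is at most Phi(s0) <= n^2. *)

Lemma sum_mul_eqb (R : pzSemiRingType) (C : finType) (F : C -> R) (a : C) :
  \sum_c F c * (c == a)%:R = F a.
Proof.
by rewrite (bigD1 a) //= eqxx mulr1 big1 ?addr0 // => c /negPf ->; rewrite mulr0.
Qed.

Lemma prod_implyb (R : comPzSemiRingType) (I : finType) (P : pred I) (i : I) :
  \prod_k ((k == i) ==> P k)%:R = (P i)%:R :> R.
Proof. by rewrite (bigD1 i) //= eqxx big1 ?mulr1 // => k /negPf ->. Qed.

Lemma sum_ffun_prod_pair (R : comPzRingType) (I C : finType) (p : I -> C -> R) :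
  (forall k, \sum_c p k c = 1) -> forall (i j : I) (a b : C), i != j ->
  \sum_(g : {ffun I -> C}) (\prod_k p k (g k)) * ((g i == a) && (g j == b))%:R
    = p i a * p j b.
Proof.
move=> p1 i j a b ij.
pose q k c := p k c * ((k == i) ==> (c == a))%:R * ((k == j) ==> (c == b))%:R.
transitivity (\sum_(g : {ffun I -> C}) \prod_k q k (g k)).
  apply: eq_bigr => g _; rewrite !big_split /=.
  rewrite (prod_implyb _ (fun k => g k == a)) (prod_implyb _ (fun k => g k == b)).
  by rewrite -mulrA -natrM mulnb.
rewrite -bigA_distr_bigA (bigD1 i) //= (bigD1 j) 1?eq_sym //=.
rewrite [\prod_(k | _) _]big1 ?mulr1 => [|k /andP[ki kj]].
  rewrite /q !eqxx (negPf ij) eq_sym (negPf ij) /=.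
  under eq_bigr do rewrite mulr1; under [X in _ * X]eq_bigr do rewrite mulr1.
  by rewrite !sum_mul_eqb.
by rewrite /q (negPf ki) (negPf kj); under eq_bigr do rewrite !mulr1.
Qed.

Lemma connect_fconnect_in (T : finType) (e : rel T) (f : T -> T) (a : {pred T}) :
  fclosed f a -> {in a, forall x, e x =1 frel f x} ->
  {in a, forall x, connect e x =1 fconnect f x}.
Proof.
move=> cl_a eE x ax y; apply/connectP/connectP => -[p pth ->]; exists p => //;
  elim: p x ax pth => //= z p IH x ax /andP[xz pth].
  have fxz : frel f x z by rewrite -eE.
  by apply/andP; split; last by apply: IH pth; rewrite -(cl_a _ _ fxz).
by apply/andP; split; [rewrite eE | apply: IH pth; rewrite -(cl_a _ _ xz)].
Qed.

Section RMM.
Variables (R : realType) (V : finType) (adj : rel V).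
Local Notation node_prob := (node_prob R adj).
Local Notation rmm_trans := (rmm_trans R adj).
Local Notation rmm_edge := (rmm_edge R adj).
Local Notation absorbing := (absorbing R adj).
Local Notation survive := (survive R adj).

Lemma node_prob_ge0 s v c : 0 <= node_prob s v c.
Proof. by rewrite /node_prob; do 3?case: ifP => _ //; case: c. Qed.

Lemma node_prob_sum s v : \sum_c node_prob s v c = 1.
Proof.
by rewrite big_bool /node_prob; do 2?case: ifP => _ /=; rewrite ?addr0 ?add0r //; lra.
Qed.

Lemma node_prob_false s v : node_prob s v false = 1 - node_prob s v true.
Proof. by rewrite -(node_prob_sum s v) big_bool addrAC subrr add0r. Qed.

Lemma rmm_trans_ge0 s t : 0 <= rmm_trans s t.
Proof. by apply: prodr_ge0 => v _; apply: node_prob_ge0. Qed.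

Lemma rmm_trans_pair s u v a b : u != v ->
  \sum_(t : coloring V) rmm_trans s t * ((t u == a) && (t v == b))%:R
    = node_prob s u a * node_prob s v b.
Proof. by move=> uv; rewrite -(sum_ffun_prod_pair (node_prob_sum s) a b uv). Qed.

Lemma survive_ge0 s0 t s : 0 <= survive s0 t s.
Proof.
elim: t s => [|t IH] s /=; rewrite ffunE; first by case: ifP.
case: ifP => // _; apply: sumr_ge0 => x _; apply: mulr_ge0 => //.
exact: rmm_trans_ge0.
Qed.

Lemma survive_absorbing s0 t s : absorbing s -> survive s0 t s = 0.
Proof. by case: t => [|t] /= abs; rewrite ffunE abs // andbF. Qed.

Lemma absorbing_of_return s :
  (forall t, connect rmm_edge s t -> connect rmm_edge t s) -> absorbing s.
Proof.
move=> back; apply/forallP => t; apply/forallP => t'.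
apply/implyP => /andP[/andP[st _] tt'].
have st' : connect rmm_edge s t' := connect_trans st (connect1 tt').
by rewrite /in_scc st' back.
Qed.

Definition nblue (s : coloring V) : R := \sum_v (s v)%:R.

Definition bw_pairs (s : coloring V) : R := \sum_u \sum_v (s u && ~~ s v)%:R.

Lemma sum_mul_compl (x : V -> R) :
  \sum_u \sum_v x u * (1 - x v) = (\sum_u x u) * (#|V|%:R - \sum_v x v).
Proof.
by rewrite mulr_suml; apply: eq_bigr => u _; rewrite -mulr_sumr sumrB sumr_const.
Qed.

Lemma bw_pairsE s : bw_pairs s = nblue s * (#|V|%:R - nblue s).
Proof.
rewrite -sum_mul_compl; apply: eq_bigr => u _; apply: eq_bigr => v _.
by case: (s u) (s v) => [] []; rewrite /= ?subrr ?subr0 ?mulr0 ?mul0r ?mulr1.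
Qed.

Lemma bw_pairs_ge0 s : 0 <= bw_pairs s.
Proof. by apply: sumr_ge0 => u _; apply: sumr_ge0. Qed.

Lemma bw_pairs_le s : 4 * bw_pairs s <= #|V|%:R ^+ 2.
Proof. rewrite bw_pairsE; have := sqr_ge0 (#|V|%:R - 2 * nblue s); nra. Qed.

Lemma expected_bw_pairs s (q := node_prob s ^~ true) :
  \sum_t rmm_trans s t * bw_pairs t
    = (\sum_u q u) * (#|V|%:R - \sum_u q u) - \sum_u q u * (1 - q u).
Proof.
rewrite -sum_mul_compl -sumrB.
under eq_bigr do rewrite mulr_sumr; rewrite exchange_big; apply: eq_bigr => u _.
under eq_bigr do rewrite mulr_sumr; rewrite exchange_big /=.
rewrite (bigD1 u) //= [X in _ = X - _](bigD1 u) //= big1 => [|t _]; last first.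
  by rewrite andbN mulr0.
rewrite add0r addrAC subrr add0r; apply: eq_bigr => v vu.
rewrite /q -node_prob_false -rmm_trans_pair 1?eq_sym //; apply: eq_bigr => t _.
by case: (t u) (t v) => [] [].
Qed.

Section Lyapunov.
Variables (f : coloring V -> R) (s0 : coloring V).
Hypothesis f_ge0 : forall s, 0 <= f s.
Hypothesis f_drift :
  forall s, ~~ absorbing s -> \sum_t rmm_trans s t * f t <= f s - 1.

Lemma survive_potential_step t :
  \sum_s survive s0 t.+1 s * f s
    <= \sum_s survive s0 t s * f s - \sum_s survive s0 t s.
Proof.
have mass_moves : \sum_s survive s0 t.+1 s * f s
    <= \sum_s survive s0 t s * \sum_s' rmm_trans s s' * f s'.
  under [X in _ <= X]eq_bigr do rewrite mulr_sumr; rewrite exchange_big /=.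
  apply: ler_sum => s' _.
  have -> : \sum_s survive s0 t s * (rmm_trans s s' * f s')
      = (\sum_s survive s0 t s * rmm_trans s s') * f s'.
    by rewrite mulr_suml; apply: eq_bigr => s _; rewrite mulrA.
  rewrite /= ffunE; case: ifP => _ //; rewrite mul0r; apply: mulr_ge0 => //.
  by apply: sumr_ge0 => s _; apply: mulr_ge0; [exact: survive_ge0 | exact: rmm_trans_ge0].
apply: (le_trans mass_moves); rewrite -sumrB; apply: ler_sum => s _.
have [abs|nabs] := boolP (absorbing s).
  by rewrite survive_absorbing // !mul0r subrr.
by rewrite -[X in _ <= _ - X]mulr1 -mulrBr ler_wpM2l ?survive_ge0 ?f_drift.
Qed.

Lemma partial_stab_time_le t :
  \sum_(0 <= k < t) \sum_s survive s0 k s + \sum_s survive s0 t s * f s <= f s0.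
Proof.
elim: t => [|t IH].
  rewrite big_geq // add0r (bigD1 s0) //= big1 => [|s ss]; last first.
    by rewrite ffunE (negPf ss) mul0r.
  by rewrite ffunE eqxx addr0; case: absorbing; rewrite ?mul0r ?mul1r.
apply: le_trans IH; rewrite big_nat_recr //= -addrA lerD2l.
have := survive_potential_step t; lra.
Qed.

Lemma stab_time_le_potential : (stab_time R adj s0 <= (f s0)%:E)%E.
Proof.
apply: lime_le.
  apply: is_cvg_nneseries => k _ _; rewrite lee_fin.
  by apply: sumr_ge0 => s _; exact: survive_ge0.
apply: nearW => t; rewrite sumEFin lee_fin.
have := partial_stab_time_le t.
have : 0 <= \sum_s survive s0 t s * f s.
  by apply: sumr_ge0 => s _; apply: mulr_ge0; [exact: survive_ge0 | exact: f_ge0].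
lra.
Qed.

End Lyapunov.

End RMM.

Section Cycle.
Variables (R : realType) (n : nat).
Hypothesis n_gt2 : (2 < n)%N.
Local Notation adj := (@cycle_adj n).
Local Notation node_prob := (node_prob R adj).
Local Notation rmm_trans := (rmm_trans R adj).
Local Notation rmm_edge := (rmm_edge R adj).

Lemma cycle_adjE (u v : 'I_n) : adj u v = (v == ordS u) || (v == ord_pred u).
Proof. by congr (_ || _); rewrite -(inj_eq (@ordS_inj n)) ord_predK eq_sym. Qed.

Lemma ordS_neq_pred (v : 'I_n) : ordS v != ord_pred v.
Proof.
apply/eqP => /(congr1 (@ordS n)); rewrite ord_predK => /(congr1 val) /=.
rewrite -addn1 modnDml addSnnS => v2v.
have : v + 2 = v + 0 %[mod n] by rewrite v2v addn0 modn_small.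
by move/eqP; rewrite eqn_modDl mod0n modn_small.
Qed.

Lemma nbcount_cycle s v c :
  nbcount adj s v c = ((s (ordS v) == c) + (s (ord_pred v) == c))%N.
Proof.
rewrite /nbcount
  (_ : [set u | _] = [set u in [seq u <- [:: ordS v; ord_pred v] | s u == c]]).
  rewrite cardsE (card_uniqP _) ?filter_uniq //= ?inE ?ordS_neq_pred //.
  by case: (s (ordS v) == c); case: (s (ord_pred v) == c).
by apply/setP => u; rewrite !inE mem_filter cycle_adjE !inE andbC.
Qed.

Lemma node_prob_cycle s v c : node_prob s v c =
  if s (ordS v) == s (ord_pred v) then (c == s (ordS v))%:R else 1 / 2.
Proof.
rewrite /node_prob !nbcount_cycle.
by case: (s (ordS v)); case: (s (ord_pred v)); case: c.
Qed.

Lemma sum_node_prob_cycle s : \sum_v node_prob s v true = nblue R s.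
Proof.
have shift (h : 'I_n -> 'I_n) : injective h -> \sum_v ((s (h v))%:R : R) = nblue R s.
  by move=> h_inj; rewrite /nblue [RHS](reindex_inj h_inj).
transitivity (\sum_v (((s (ordS v))%:R + (s (ord_pred v))%:R) / 2 : R)).
  apply: eq_bigr => v _; rewrite node_prob_cycle.
  by case: (s (ordS v)); case: (s (ord_pred v)); rewrite /= ?mulr1n ?mulr0n; lra.
rewrite -mulr_suml big_split /= !shift; [lra | exact: ord_pred_inj | exact: ordS_inj].
Qed.

Lemma node_prob_var s v :
  node_prob s v true * (1 - node_prob s v true) =
  if s (ordS v) == s (ord_pred v) then 0 else 4^-1.
Proof.
rewrite node_prob_cycle; case: ifP => _; last by lra.
by case: (s (ordS v)); rewrite /= ?subrr ?mulr0 ?mul0r.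
Qed.

Definition tie_free (s : coloring 'I_n) := [forall v, s (ordS v) == s (ord_pred v)].

Lemma tie_drift s : ~~ tie_free s ->
  \sum_t rmm_trans s t * (4 * bw_pairs R t) <= 4 * bw_pairs R s - 1.
Proof.
move=> /forallPn [v tie_v].
have var_ge : 4^-1 <= \sum_u node_prob s u true * (1 - node_prob s u true).
  rewrite (bigD1 v) //= node_prob_var (negPf tie_v) lerDl.
  by apply: sumr_ge0 => u _; rewrite node_prob_var; case: ifP.
under eq_bigr do rewrite mulrCA.
rewrite -mulr_sumr expected_bw_pairs sum_node_prob_cycle !bw_pairsE.
lra.
Qed.

Definition rotate (s : coloring 'I_n) : coloring 'I_n := [ffun v => s (ordS v)].

Lemma rotate_inj : injective rotate.
Proof.
move=> s1 s2 /ffunP eq12; apply/ffunP => v.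
by have := eq12 (ord_pred v); rewrite !ffunE ord_predK.
Qed.

Lemma tie_free_rotate s : tie_free (rotate s) = tie_free s.
Proof.
apply/forallP/forallP => tf v.
  by have := tf (ord_pred v); rewrite !ffunE !ord_predK.
by rewrite !ffunE ord_predK; have := tf (ordS v); rewrite ordSK.
Qed.

Lemma fclosed_tie_free : fclosed rotate tie_free.
Proof. by move=> s t /eqP <-; apply/esym/tie_free_rotate. Qed.

Lemma rmm_trans_tie_free s t : tie_free s -> rmm_trans s t = (rotate s == t)%:R.
Proof.
move=> /forallP tf.
rewrite /rmm_trans (eq_bigr (fun v => (t v == s (ordS v))%:R)); last first.
  by move=> v _; rewrite node_prob_cycle (eqP (tf v)) eqxx.
case: eqP => [<- | ne]; first by rewrite big1 // => v _; rewrite ffunE eqxx.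
have /existsP [v tv] : [exists v, t v != s (ordS v)].
  rewrite -negb_forall; apply: contra_notN ne => /forallP tv.
  by apply/ffunP => v; rewrite ffunE (eqP (tv v)).
by rewrite (bigD1 v) //= (negPf tv) mul0r.
Qed.

Lemma connect_tie_free s : tie_free s -> connect rmm_edge s =1 fconnect rotate s.
Proof.
apply: (connect_fconnect_in fclosed_tie_free) => x tfx y.
by rewrite /rmm_edge rmm_trans_tie_free // ltr0n lt0b.
Qed.

Lemma tie_free_absorbing s : tie_free s -> absorbing R adj s.
Proof.
move=> tf; apply: absorbing_of_return => t; rewrite connect_tie_free // => st.
have tft : tie_free t by rewrite -[tie_free t](closed_connect fclosed_tie_free st).
by rewrite connect_tie_free // fconnect_sym //; exact: rotate_inj.
Qed.

End Cycle.

Theorem theorem2p5 (R : realType) :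
  exists c : R, 0 < c /\
    forall n : nat, (3 <= n)%N ->
      forall s0 : coloring 'I_n,
        (stab_time R (@cycle_adj n) s0 <= (c * (n%:R) ^+ 2)%:E)%E.
Proof.
exists 1; split => // n n_gt2 s0; rewrite mul1r.
apply: (le_trans (stab_time_le_potential (f := fun s => 4 * bw_pairs R s) s0 _ _)).
- by move=> s; rewrite mulr_ge0 ?bw_pairs_ge0.
- move=> s nabs; apply: tie_drift => //; apply: contra nabs; exact: tie_free_absorbing.
by rewrite lee_fin; have := bw_pairs_le R s0; rewrite card_ord.
Qed.
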